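(* Let $P$ be the set of $n\geq 3$ points equally spaced on the unit circle. Every $t$-spanner on $P$ with $t<2$ that has tree-width $2$ is plane.
   Context: A $t$-spanner on $P$ is a graph with vertex set $P$, edges weighted by Euclidean distance, such that for all $p\neq p'\in P$ the shortest-path distance between $p$ and $p'$ is at most $t$ times their Euclidean distance. Plane means the straight-line drawing with vertices at the points of $P$ has no edge crossings. *)

From Stdlib Require Import Reals.
From mathcomp Require Import all_boot.
Set Implicit Arguments. Unset Strict Implicit. Unset Printing Implicit Defensive.

Local Open Scope R_scope.

Definition pt := (R * R)%type.

Definition eucl (p q : pt) : R :=
  sqrt ((fst p - fst q) ^ 2 + (snd p - snd q) ^ 2).

Definition circ_pt (n : nat) (k : 'I_n) : pt :=
  (cos (2 * PI * INR k / INR n), sin (2 * PI * INR k / INR n)).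

Definition simple_graph (n : nat) (e : rel 'I_n) : Prop :=
  (forall x y, e x y = e y x) /\ (forall x, e x x = false).

Fixpoint walk_len (n : nat) (x : 'I_n) (s : seq 'I_n) : R :=
  match s with
  | [::] => 0
  | y :: s' => eucl (circ_pt x) (circ_pt y) + walk_len y s'
  end.

Definition is_spanner (n : nat) (e : rel 'I_n) (t : R) : Prop :=
  forall x y : 'I_n, x <> y ->
    exists s : seq 'I_n,
      path e x s /\ last x s = y /\
      walk_len x s <= t * eucl (circ_pt x) (circ_pt y).

Definition is_tree (m : nat) (te : rel 'I_m.+1) : Prop :=
  (forall a b, te a b = te b a) /\ (forall a, te a a = false) /\
  (forall a b, connect te a b) /\
  (forall c : seq 'I_m.+1, (3 <= size c)%N -> ~~ ucycleb te c).

Definition has_tree_decomposition (n : nat) (e : rel 'I_n) (k : nat) : Prop :=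
  exists (m : nat) (te : rel 'I_m.+1) (bag : 'I_m.+1 -> {set 'I_n}),
    is_tree te /\
    (forall v : 'I_n, exists i, v \in bag i) /\
    (forall u v : 'I_n, e u v -> exists i, (u \in bag i) && (v \in bag i)) /\
    (forall (v : 'I_n) (i j : 'I_m.+1), v \in bag i -> v \in bag j ->
        connect [rel a b | [&& te a b, v \in bag a & v \in bag b]] i j) /\
    (forall i, (#|bag i| <= k.+1)%N).

Definition treewidth_eq (n : nat) (e : rel 'I_n) (k : nat) : Prop :=
  has_tree_decomposition e k /\
  (forall k', (k' < k)%N -> ~ has_tree_decomposition e k').

Definition on_segment (p q z : pt) : Prop :=
  exists lam : R, 0 <= lam <= 1 /\
    z = ((1 - lam) * fst p + lam * fst q, (1 - lam) * snd p + lam * snd q).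

Definition is_plane (n : nat) (e : rel 'I_n) : Prop :=
  forall a b c d : 'I_n, e a b -> e c d ->
    ~ ((a = c /\ b = d) \/ (a = d /\ b = c)) ->
    forall z : pt,
      on_segment (circ_pt a) (circ_pt b) z ->
      on_segment (circ_pt c) (circ_pt d) z ->
      (z = circ_pt a \/ z = circ_pt b) /\ (z = circ_pt c \/ z = circ_pt d).

From Stdlib Require Import Reals Lra.
From mathcomp Require Import all_boot zify.
Set Implicit Arguments. Unset Strict Implicit. Unset Printing Implicit Defensive.

(* Since every walk of two or more steps between distinct vertices of the
   regular n-gon is at least twice as long as a side, a t-spanner with t < 2
   contains all n sides.  If two of its edges crossed, their endpoints would
   interleave as W < X < Y < Z around the circle, with edges WY and XZ.  The
   arcs [0, X), [X, Y), [Y, Z) and [Z, n) are then connected (by sides) and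
   pairwise adjacent (by sides and the two chords): a K4 minor.  By the Helly
   property of subtrees of a tree, some bag of any tree decomposition meets all
   four arcs, so the width is at least 3. *)

Section PlaneGeometry.
Local Open Scope R_scope.

Definition cross (p q r : pt) : R :=
  (fst q - fst p) * (snd r - snd p) - (snd q - snd p) * (fst r - fst p).

Lemma on_segment_cross p q r s z :
  on_segment p q z -> on_segment r s z ->
  exists2 lam, 0 <= lam <= 1 &
    z = ((1 - lam) * fst p + lam * fst q, (1 - lam) * snd p + lam * snd q) /\
    (1 - lam) * cross r s p + lam * cross r s q = 0.
Proof.
move=> [lam [lam01 zE]] [mu [_ zE']]; exists lam => //; split => //.
have : cross r s z = 0 by rewrite zE' /cross /=; ring.
by rewrite zE /cross /=; lra.
Qed.

Lemma convex_comb_neq0 lam u v :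
  0 <= lam <= 1 -> 0 < u * v -> (1 - lam) * u + lam * v <> 0.
Proof.
move=> lam01 uv comb0; have uu : 0 < u * u by nra.
have : (1 - lam) * (u * u) + lam * (u * v) = 0.
  by transitivity (u * ((1 - lam) * u + lam * v)); [ring | rewrite comb0; ring].
have [lt_lam1 | ge_lam1] := Rlt_le_dec lam 1; last by rewrite (_ : lam = 1); lra.
have := Rmult_le_pos lam (u * v) ltac:(lra) ltac:(lra).
have := Rmult_lt_0_compat (1 - lam) (u * u) ltac:(lra) uu.
lra.
Qed.

(* Points are parameterized by half their polar angle, so that chords have
   length [2 |sin (a - b)|]. *)
Definition circ (a : R) : pt := (cos (2 * a), sin (2 * a)).

Lemma eucl_circ a b : eucl (circ a) (circ b) = 2 * Rabs (sin (a - b)).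
Proof.
have sq : (cos (2 * a) - cos (2 * b)) ^ 2 + (sin (2 * a) - sin (2 * b)) ^ 2
          = Rsqr (2 * sin (a - b)).
  have := sin2_cos2 (2 * a); have := sin2_cos2 (2 * b).
  have := cos_minus (2 * a) (2 * b); have := cos_2a_sin (a - b).
  rewrite /Rsqr (_ : 2 * a - 2 * b = 2 * (a - b)); [nra | ring].
by rewrite /eucl /= sq sqrt_Rsqr_abs Rabs_mult Rabs_pos_eq; lra.
Qed.

Lemma cross_circ a b x :
  cross (circ a) (circ b) (circ x) = 4 * sin (x - b) * sin (b - a) * sin (x - a).
Proof.
have half_sub u v : (2 * u - 2 * v) / 2 = u - v by field.
have half_add u v : (2 * u + 2 * v) / 2 = u + v by field.
rewrite /cross /= !form2 !form4 !half_sub !half_add.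
by rewrite (_ : x - b = (x + a) - (b + a)) ?[sin (x + a - _)]sin_minus; ring.
Qed.

Lemma sin_ge_sin_between a x : 0 <= a -> a <= x <= PI - a -> sin a <= sin x.
Proof.
move=> a_ge0 ax.
have [x_le|x_gt] := Rle_lt_dec x (PI / 2); first by apply: sin_incr_1; lra.
by rewrite -(sin_PI_x x); apply: sin_incr_1; lra.
Qed.

End PlaneGeometry.

Section RegularPolygon.
Local Open Scope R_scope.

Definition ang (n k : nat) : R := PI * INR k / INR n.

Lemma circ_ptE n (k : 'I_n) : circ_pt k = circ (ang n k).
Proof. by rewrite /circ_pt /circ /ang /Rdiv !Rmult_assoc. Qed.

Lemma ang_sub n k k' : (k' <= k)%N -> ang n k - ang n k' = PI * INR (k - k') / INR n.
Proof. by move=> le_k'k; rewrite /ang minus_INR; [rewrite /Rdiv; ring | apply/leP]. Qed.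

Lemma sin_PI_div_gt0 n : (1 < n)%N -> 0 < sin (PI / INR n).
Proof.
move=> n_gt1; have : 2 <= INR n by apply: (le_INR 2); apply/leP.
move=> n2; have := PI_RGT_0 => PI_gt0.
apply: sin_gt_0; first by apply: Rdiv_lt_0_compat; lra.
by apply: (Rmult_lt_reg_r (INR n)); [lra | rewrite /Rdiv Rmult_assoc Rinv_l; nra].
Qed.

Lemma sin_ang_sub_ge n k k' : (k' < k < n)%N ->
  sin (PI / INR n) <= sin (ang n k - ang n k').
Proof.
move=> /andP [lt_k'k lt_kn]; rewrite ang_sub; last exact: ltnW.
have n_gt0 : 0 < INR n by apply: lt_0_INR; apply/ltP; lia.
have lo : 1 <= INR (k - k') by apply: (le_INR 1); apply/leP; lia.
have hi : INR (k - k') <= INR n - 1.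
  by rewrite -(minus_INR n 1); [apply: le_INR; apply/leP | apply/leP]; lia.
have PI_gt0 := PI_RGT_0.
apply: sin_ge_sin_between; first by apply: Rlt_le; apply: Rdiv_lt_0_compat.
have -> : PI - PI / INR n = PI * (INR n - 1) / INR n by field; lra.
have inv_ge0 : 0 <= / INR n by apply: Rlt_le; apply: Rinv_0_lt_compat.
rewrite /Rdiv -{1}(Rmult_1_r PI).
by split; apply: Rmult_le_compat_r => //; apply: Rmult_le_compat_l; lra.
Qed.

Lemma sin_ang_sub_gt0 n k k' : (k' < k < n)%N -> 0 < sin (ang n k - ang n k').
Proof.
move=> kk'; apply: Rlt_le_trans (sin_ang_sub_ge kk').
by apply: sin_PI_div_gt0; lia.
Qed.

Lemma sin_ang_sub_lt0 n k k' : (k < k' < n)%N -> sin (ang n k - ang n k') < 0.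
Proof.
move=> kk'; have := sin_ang_sub_gt0 kk'.
by rewrite -(Ropp_minus_distr (ang n k')) sin_neg; lra.
Qed.

Lemma Rabs_sin_ang_sub_ge n (k k' : 'I_n) : k != k' ->
  sin (PI / INR n) <= Rabs (sin (ang n k - ang n k')).
Proof.
have := ltn_ord k; have := ltn_ord k'.
case: (ltngtP k k') => [lt_kk' | lt_k'k | /val_inj ->]; last by rewrite eqxx.
- move=> lt_k' _ _; rewrite -(Ropp_minus_distr (ang n k')) sin_neg Rabs_Ropp.
  rewrite Rabs_pos_eq; first by apply: sin_ang_sub_ge; lia.
  by apply: Rlt_le; apply: sin_ang_sub_gt0; lia.
- move=> _ lt_k _; rewrite Rabs_pos_eq; first by apply: sin_ang_sub_ge; lia.
  by apply: Rlt_le; apply: sin_ang_sub_gt0; lia.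
Qed.

Lemma eucl_circ_pt_ge n (k k' : 'I_n) : k != k' ->
  2 * sin (PI / INR n) <= eucl (circ_pt k) (circ_pt k').
Proof.
by move=> kk'; rewrite !circ_ptE eucl_circ; have := Rabs_sin_ang_sub_ge kk'; lra.
Qed.

Lemma eucl_circ_pt_ordS n (k : 'I_n) : (1 < n)%N ->
  eucl (circ_pt k) (circ_pt (ordS k)) = 2 * sin (PI / INR n).
Proof.
move=> n_gt1; have sin_gt0 := sin_PI_div_gt0 n_gt1.
have n_gt0 : 0 < INR n by apply: lt_0_INR; apply/ltP; lia.
rewrite !circ_ptE eucl_circ /= /ang; congr (2 * _).
have [lt_k1n | ge_k1n] := ltnP k.+1 n.
- rewrite modn_small // S_INR.
  have -> : PI * INR k / INR n - PI * (INR k + 1) / INR n = - (PI / INR n).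
    by field; lra.
  by rewrite sin_neg Rabs_Ropp Rabs_pos_eq; lra.
- have k1n : k.+1 = n by have := ltn_ord k; lia.
  have -> : INR k = INR n - 1.
    have : INR k.+1 = INR n by rewrite k1n.
    by rewrite S_INR; lra.
  rewrite k1n modnn /= /Rdiv Rmult_0_r Rmult_0_l Rminus_0_r.
  have -> : PI * (INR n - 1) * / INR n = PI - PI / INR n by field; lra.
  by rewrite sin_PI_x Rabs_pos_eq; lra.
Qed.

Section Chords.
Variable n : nat.
Implicit Types a b c d x y : 'I_n.

Lemma sin_ang_sub_sign x y : x != y ->
  (x < y)%N /\ sin (ang n x - ang n y) < 0 \/ (y < x)%N /\ 0 < sin (ang n x - ang n y).
Proof.
have := ltn_ord x; have := ltn_ord y.
case: (ltngtP x y) => [xy|xy|/val_inj ->]; last by rewrite eqxx.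
- by left; split => //; apply: sin_ang_sub_lt0; lia.
- by right; split => //; apply: sin_ang_sub_gt0; lia.
Qed.

Definition inside c d x : bool := (minn c d < x < maxn c d)%N.

Lemma inside_sign c d x : x != c -> x != d ->
  0 < (if inside c d x then -1 else 1) *
      (sin (ang n x - ang n c) * sin (ang n x - ang n d)).
Proof.
rewrite /inside => /sin_ang_sub_sign [[xc sc] | [xc sc]].
all: move=> /sin_ang_sub_sign [[xd sd] | [xd sd]]; case: ifP => ins; try lia; nra.
Qed.

Lemma cross_circ_pt_eq0 c d x : c != d ->
  cross (circ_pt c) (circ_pt d) (circ_pt x) = 0 <-> x \in [:: c; d].
Proof.
move=> cd; split; last by rewrite !inE => /pred2P [] ->; rewrite /cross; ring.
apply: contraPT; rewrite !inE => /norP [xc xd].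
have nz y y' : y != y' -> sin (ang n y - ang n y') <> 0.
  by case/sin_ang_sub_sign => [[_]|[_]]; lra.
have dc : d != c by rewrite eq_sym.
rewrite !circ_ptE cross_circ.
by repeat apply: Rmult_integral_contrapositive_currified; first [lra | exact: nz].
Qed.

Lemma cross_circ_pt_same_side c d x y : c != d ->
  x \notin [:: c; d] -> y \notin [:: c; d] -> inside c d x = inside c d y ->
  0 < cross (circ_pt c) (circ_pt d) (circ_pt x) * cross (circ_pt c) (circ_pt d) (circ_pt y).
Proof.
rewrite !inE => cd /norP [xc xd] /norP [yc yd] same.
have := inside_sign xc xd; have := inside_sign yc yd; rewrite -same !circ_ptE !cross_circ.
have r2 : 0 < sin (ang n d - ang n c) ^ 2.
  have /sin_ang_sub_sign : d != c by rewrite eq_sym.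
  by case=> [[_ ?] | [_ ?]]; nra.
by case: (inside c d x) => hy hx;
  have := Rmult_lt_0_compat _ _ (Rmult_lt_0_compat _ _ r2 hx) hy; lra.
Qed.

Definition interleaved a b c d : bool :=
  [&& a \notin [:: c; d], b \notin [:: c; d] & inside c d a != inside c d b].

Lemma circ_chords_meet a b c d z : a != b -> c != d ->
  ~ ((a = c /\ b = d) \/ (a = d /\ b = c)) ->
  on_segment (circ_pt a) (circ_pt b) z -> on_segment (circ_pt c) (circ_pt d) z ->
  (z = circ_pt a \/ z = circ_pt b) /\ (z = circ_pt c \/ z = circ_pt d) \/
  interleaved a b c d.
Proof.
move=> ab cd not_same zab zcd.
have [lam lam01 [zE comb]] := on_segment_cross zab zcd.
have endpoint x : x \in [:: c; d] -> circ_pt x = circ_pt c \/ circ_pt x = circ_pt d.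
  by rewrite !inE => /pred2P [] ->; [left | right].
have f0 x := cross_circ_pt_eq0 x cd.
case: (boolP (a \in [:: c; d])) => ac; case: (boolP (b \in [:: c; d])) => bc.
- exfalso; apply: not_same; move: ab; rewrite !inE in ac bc.
  by case/pred2P: ac => ->; case/pred2P: bc => ->; rewrite ?eqxx //; auto.
- have lam0 : lam = 0.
    have fb : cross (circ_pt c) (circ_pt d) (circ_pt b) <> 0 by move/f0; apply/negP.
    by move: comb; rewrite (proj2 (f0 a) ac); nra.
  have za : z = circ_pt a.
    by rewrite zE lam0; case: (circ_pt a) (circ_pt b) => ? ? [? ?] /=; f_equal; ring.
  by left; rewrite za; split; [left | exact: endpoint].
- have lam1 : lam = 1.
    have fa : cross (circ_pt c) (circ_pt d) (circ_pt a) <> 0 by move/f0; apply/negP.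
    by move: comb; rewrite (proj2 (f0 b) bc); nra.
  have zb : z = circ_pt b.
    by rewrite zE lam1; case: (circ_pt a) (circ_pt b) => ? ? [? ?] /=; f_equal; ring.
  by left; rewrite zb; split; [right | exact: endpoint].
- right; rewrite /interleaved ac bc /=; apply/negP => /eqP same.
  exact: convex_comb_neq0 lam01 (cross_circ_pt_same_side cd ac bc same) comb.
Qed.

End Chords.

Section SpannerSides.
Variables (n : nat) (e : rel 'I_n).
Hypothesis e_irr : irreflexive e.

Lemma walk_len_ge x s : path e x s ->
  INR (size s) * (2 * sin (PI / INR n)) <= walk_len x s.
Proof.
elim: s x => [|y s IHs] x; first by rewrite /=; lra.
case/andP=> exy /IHs IH.
have : x != y by apply: contraTneq exy => ->; rewrite e_irr.
have -> : INR (size (y :: s)) = INR (size s) + 1 by rewrite -S_INR.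
by move/eucl_circ_pt_ge; rewrite [walk_len x _]/=; lra.
Qed.

Lemma spanner_sides t : (3 <= n)%N -> t < 2 -> is_spanner e t -> forall u, e u (ordS u).
Proof.
move=> n3 t2 span u; apply/negPn/negP => not_side.
have u_ne : u <> ordS u.
  move/(congr1 val) => /=; have := ltn_ord u.
  case: (ltnP u.+1 n) => [/modn_small -> | ? ?]; first lia.
  by rewrite (_ : u.+1 = n) ?modnn; lia.
have [s [walk [last_s len_s]]] := span u (ordS u) u_ne.
have size_s : (2 <= size s)%N.
  case: s walk last_s {len_s} => [_ /u_ne // | y [|? ?] //=].
  by rewrite andbT => eu yE; rewrite -yE eu in not_side.
have := walk_len_ge walk; rewrite eucl_circ_pt_ordS in len_s; last lia.
have : 2 <= INR (size s) by apply: (le_INR 2); apply/leP.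
have : 0 < sin (PI / INR n) by apply: sin_PI_div_gt0; lia.
by nra.
Qed.

End SpannerSides.

End RegularPolygon.

Lemma interleavedCl n (a b c d : 'I_n) : interleaved a b c d = interleaved b a c d.
Proof. by rewrite /interleaved andbCA eq_sym. Qed.

Lemma interleavedCr n (a b c d : 'I_n) : interleaved a b c d = interleaved a b d c.
Proof.
by rewrite /interleaved /inside !inE minnC maxnC (orbC (a == c)) (orbC (b == c)).
Qed.

Lemma interleaved_edges n (e : rel 'I_n) (a b c d : 'I_n) : symmetric e ->
  e a b -> e c d -> interleaved a b c d ->
  exists W X Y Z : 'I_n, [/\ (W < X < Y)%N, (Y < Z)%N, e W Y & e X Z].
Proof.
move=> e_sym; wlog lt_cd : c d / (c < d)%N.
  move=> wlog_cd eab ecd; case: (ltngtP c d) => [lt_cd | lt_dc | /val_inj cd].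
  - exact: wlog_cd.
  - by rewrite interleavedCr; apply: (wlog_cd d c lt_dc eab); rewrite e_sym.
  - have no (x : nat) : (d < x < d)%N = false by lia.
    by rewrite /interleaved /inside cd minnn maxnn !no /= !andbF.
wlog ins_a : a b / inside c d a.
  move=> wlog_a eab ecd ilv; case ins: (inside c d a); first exact: wlog_a ins eab ecd ilv.
  rewrite e_sym in eab; rewrite interleavedCl in ilv; apply: (wlog_a b a) => //.
  by move: ilv; rewrite /interleaved ins; case: (inside c d b); rewrite ?andbF.
move=> eab ecd /and3P [_]; rewrite !inE => /norP [/eqP bc /eqP bd].
rewrite ins_a; case b_in : (inside c d b) => // _.
move: ins_a b_in; rewrite /inside (minn_idPl (ltnW lt_cd)) (maxn_idPr (ltnW lt_cd)).
move=> /andP [ca ad] /negbT; rewrite negb_and -!leqNgt => b_out.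
have b_ne : (b : nat) <> c /\ (b : nat) <> d by split => /val_inj.
have [lt_bc | le_cb] := ltnP b c.
  by exists b, c, a, d; split; rewrite ?(e_sym b) //; lia.
by exists c, a, d, b; split => //; lia.
Qed.

Definition acyclic (T : eqType) (te : rel T) : Prop :=
  forall c : seq T, (3 <= size c)%N -> ~~ ucycleb te c.

Section Trees.
Variables (T : finType) (te : rel T).
Hypothesis te_acyclic : acyclic te.

(* Iterating [f] eventually cycles; a cycle of length 1 or 2 would backtrack
   and a longer one is a cycle of [te]. *)
Lemma acyclic_nonbacktracking_void (f : T -> T) :
  (forall x, te x (f x)) -> (forall x, f (f x) != x) -> T -> False.
Proof.
move=> te_f f_nb x0.
have /trajectP [i lt_i def_i] := looping_order f x0.
set y := iter i f x0 in def_i.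
have y_cyc : fcycle f (orbit f y).
  apply/(orbitPcycle 0 3); exists (order f x0 - i).-1.
  by rewrite prednK ?subn_gt0 // /y -iterD subnK //; exact: ltnW.
have y_ret : iter (order f y) f y = y by apply/(orbitPcycle 0 4).
have [o_gt2 | ] := ltnP 2 (order f y).
  have := @te_acyclic (orbit f y); rewrite size_orbit /ucycleb orbit_uniq andbT.
  by move/(_ o_gt2)/negP; apply; apply: sub_cycle y_cyc => a b /eqP <-.
have := f_nb y; have := order_gt0 f y.
by case: (order f y) y_ret => [|[|[|]]] //= fy; rewrite ?fy eqxx.
Qed.

Hypotheses (te_sym : symmetric te) (te_irr : irreflexive te).

Definition cut (x y : T) : rel T :=
  [rel a b | te a b && ~~ ((a == x) && (b == y) || (a == y) && (b == x))].

Lemma cut_sym x y : symmetric (cut x y).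
Proof. by move=> a b; rewrite /cut /= te_sym orbC (andbC (a == y)) (andbC (a == x)). Qed.

Lemma cutC x y : cut x y =2 cut y x.
Proof. by move=> a b; rewrite /cut /= orbC. Qed.

Lemma cut_separates x y : te x y -> ~~ connect (cut x y) y x.
Proof.
move=> txy; have xy : x != y by apply: contraTneq txy => ->; rewrite te_irr.
apply/negP => /connectP [p p_path p_last].
case: (shortenP p_path) p_last => {p_path} q q_path q_uniq _ q_last.
case: q q_path q_uniq q_last => [_ _ /= yx | z [| z' q]].
- by rewrite yx eqxx in xy.
- by move=> /= /andP [cut_yz _] _ zx; move: cut_yz; rewrite -zx /cut /= !eqxx orbT andbF.
move=> q_path q_uniq q_last.
have := @te_acyclic [:: y, z, z' & q] isT; rewrite /ucycleb q_uniq andbT => /negP; apply.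
rewrite /cycle rcons_path -q_last txy andbT.
by apply: sub_path q_path => a b /andP [].
Qed.

Lemma connect_cut_avoiding (S : pred T) x y z w : ~~ S x ->
  connect [rel a b | [&& te a b, S a & S b]] z w -> connect (cut x y) z w.
Proof.
move=> Sx; apply: connect_sub => a b /and3P [tab Sa Sb]; apply: connect1.
have [ax | ax] := eqVneq a x; first by rewrite -ax Sa in Sx.
have [bx | bx] := eqVneq b x; first by rewrite -bx Sb in Sx.
by rewrite /cut /= tab (negbTE ax) (negbTE bx) andbF.
Qed.

Hypothesis te_connected : forall a b, connect te a b.

Lemma exists_branch x z : x != z -> exists2 y, te x y & connect (cut x y) y z.
Proof.
move=> xz; have /connectP [p p_path p_last] := te_connected x z.
case: (shortenP p_path) p_last => {p_path} q q_path q_uniq _ q_last.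
case: q q_path q_uniq q_last => [_ _ /= xz' | y q]; first by rewrite xz' eqxx in xz.
move=> /= /andP [txy y_path] /andP [x_q _] q_last.
exists y => //; apply/connectP; exists q => //.
apply: (sub_in_path (P := predC1 x)) y_path; last first.
  by apply/allP => a a_yq /=; apply: contraNneq x_q => <-.
move=> a b /= ax bx tab; rewrite /cut /= tab.
by rewrite (negbTE ax) (negbTE bx) andbF.
Qed.

Section Helly.
Variables (K : finType) (N : K -> pred T).
Hypothesis N_connected : forall k i j, N k i -> N k j ->
  connect [rel a b | [&& te a b, N k a & N k b]] i j.
Hypothesis N_meet : forall k l, exists i, N k i && N l i.

Definition toward x y := te x y &&
  [exists k, ~~ N k x && [exists z, N k z && connect (cut x y) y z]].

Lemma toward_exists x : (exists k, ~~ N k x) -> exists y, toward x y.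
Proof.
move=> [k Nkx]; have [z /andP [Nkz _]] := N_meet k k.
have [y txy yz] : exists2 y, te x y & connect (cut x y) y z.
  by apply: exists_branch; apply: contraNneq Nkx => ->.
exists y; rewrite /toward txy; apply/existsP; exists k; rewrite Nkx /=.
by apply/existsP; exists z; rewrite Nkz.
Qed.

(* Edges pointing at each other would put two intersecting subtrees on
   opposite sides of the edge [x y]. *)
Lemma toward_asym x y : toward x y -> toward y x -> False.
Proof.
move=> /andP [txy /existsP [k /andP [Nkx /existsP [z /andP [Nkz yz]]]]].
move=> /andP [_ /existsP [l /andP [Nly /existsP [z' /andP [Nlz' xz']]]]].
have [w /andP [Nkw Nlw]] := N_meet k l.
have yw := connect_trans yz (connect_cut_avoiding y Nkx (N_connected Nkz Nkw)).
have xw := connect_trans xz' (connect_cut_avoiding x Nly (N_connected Nlz' Nlw)).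
rewrite (eq_connect (cutC y x)) (sym_connect_sym (cut_sym x y)) in xw.
by have := cut_separates txy; rewrite (connect_trans yw xw).
Qed.

Lemma tree_helly (k0 : K) : exists i, forall k, N k i.
Proof.
have [/existsP [i /forallP Ni] | no_common] := boolP [exists i, [forall k, N k i]].
  by exists i.
have miss x : exists k, ~~ N k x.
  move: no_common; rewrite negb_exists => /forallP /(_ x).
  by rewrite negb_forall => /existsP.
pose f x := odflt x [pick y | toward x y].
have toward_f x : toward x (f x).
  rewrite /f; case: pickP => [// | none].
  by have [y] := toward_exists (miss x); rewrite none.
have [x0 _] := N_meet k0 k0.
exfalso; apply: (acyclic_nonbacktracking_void (f := f) _ _ x0) => x.
  by case/andP: (toward_f x).
apply/eqP => ffx; apply: (toward_asym (toward_f x)).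
by rewrite -{2}ffx; exact: toward_f.
Qed.

End Helly.

End Trees.

Section CliqueMinor.
Variables (n : nat) (e : rel 'I_n) (K : finType) (c : 'I_n -> K).
Hypothesis class_connected : forall u v, c u = c v ->
  connect [rel x y | [&& e x y, c x == c u & c y == c u]] u v.
Hypothesis classes_touch : forall k l,
  exists u v, [/\ c u = k, c v = l & u = v \/ e u v].

Section Decomposition.
Variables (m : nat) (te : rel 'I_m.+1) (bag : 'I_m.+1 -> {set 'I_n}).
Hypothesis bag_cover : forall v, exists i, v \in bag i.
Hypothesis bag_edge : forall u v, e u v -> exists i, (u \in bag i) && (v \in bag i).
Hypothesis bag_connected : forall v i j, v \in bag i -> v \in bag j ->
  connect [rel a b | [&& te a b, v \in bag a & v \in bag b]] i j.

Definition bag_meets k i := [exists v in bag i, c v == k].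

Lemma bag_meets_connected k i j : bag_meets k i -> bag_meets k j ->
  connect [rel a b | [&& te a b, bag_meets k a & bag_meets k b]] i j.
Proof.
have via v i' j' : c v = k -> v \in bag i' -> v \in bag j' ->
    connect [rel a b | [&& te a b, bag_meets k a & bag_meets k b]] i' j'.
  move=> cv vi vj; apply: connect_sub (bag_connected vi vj) => a b /and3P [tab va vb].
  apply: connect1; rewrite /= tab /bag_meets /=.
  by apply/andP; split; apply/exists_inP; exists v; rewrite ?cv.
move=> /exists_inP [v vi /eqP cv] /exists_inP [v' v'j /eqP cv'].
have /connectP [p p_path p_last] := class_connected (etrans cv (esym cv')).
rewrite cv in p_path; elim: p v i p_path p_last cv vi {cv'} => [|w p IHp] v i /=.
  by move=> _ <- cv vi; exact: via cv vi v'j.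
move=> /andP [/and3P [evw _ /eqP cw] w_path] p_last cv vi.
have [l /andP [vl wl]] := bag_edge evw.
exact: connect_trans (via v i l cv vi vl) (IHp w l w_path p_last cw wl).
Qed.

Lemma bag_meets_pairwise k l : exists i, bag_meets k i && bag_meets l i.
Proof.
have [u [v [cu cv uv]]] := classes_touch k l.
have [i /andP [ui vi]] : exists i, (u \in bag i) && (v \in bag i).
  case: uv => [<- | /bag_edge //]; have [i ui] := bag_cover u.
  by exists i; rewrite ui.
exists i; rewrite /bag_meets; apply/andP.
by split; apply/exists_inP; [exists u | exists v]; rewrite ?cu ?cv.
Qed.

End Decomposition.

Lemma tree_decomposition_clique_minor w : has_tree_decomposition e w -> (#|K| <= w.+1)%N.
Proof.
move=> [m [te [bag [[te_sym [te_irr [te_conn te_acyc]]] [cover [edge [conn size_bag]]]]]]].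
have [-> // | /card_gt0P [k0 _]] := posnP #|K|.
have [i meets] := tree_helly te_acyc te_sym te_irr te_conn
  (bag_meets_connected edge conn) (bag_meets_pairwise cover edge) k0.
have : [set: K] \subset c @: bag i.
  by apply/subsetP => k _; have /exists_inP [v vi /eqP <-] := meets k; apply: imset_f.
move/subset_leq_card; rewrite cardsT => /leq_trans; apply.
exact: leq_trans (leq_imset_card c _) (size_bag i).
Qed.

End CliqueMinor.

Lemma val_ord_pred n (v : 'I_n) : (0 < v)%N -> (ord_pred v : nat) = v.-1.
Proof.
move=> v_gt0; have lt_vn := ltn_ord v.
by rewrite /= -subn1 -addnBAC // modnDr modn_small; lia.
Qed.

Section PolygonMinor.
Variables (n : nat) (e : rel 'I_n).
Hypotheses (e_sym : symmetric e) (e_sides : forall u, e u (ordS u)).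

Lemma e_ord_pred v : e (ord_pred v) v.
Proof. by rewrite -{2}(ord_predK v). Qed.

Lemma interval_connected (P : pred 'I_n) (u v : 'I_n) : (u <= v)%N ->
  (forall w : 'I_n, (u <= w <= v)%N -> P w) ->
  connect [rel x y | [&& e x y, P x & P y]] u v.
Proof.
move=> uv P_uv; move Ed: (v - u)%N => d.
elim: d v uv P_uv Ed => [|d IHd] v uv P_uv Ed.
  by have -> : v = u by apply: ord_inj; lia.
have v_gt0 : (0 < v)%N by lia.
have w_val := val_ord_pred v_gt0.
apply: connect_trans (IHd (ord_pred v) _ _ _) (connect1 _); rewrite ?w_val; try lia.
  by move=> w uw; apply: P_uv; lia.
by rewrite /= e_ord_pred !P_uv ?w_val; lia.
Qed.

Variables (W X Y Z : 'I_n).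
Hypotheses (lt_WX : (W < X)%N) (lt_XY : (X < Y)%N) (lt_YZ : (Y < Z)%N).
Hypotheses (eWY : e W Y) (eXZ : e X Z).

(* [arc v] numbers the arc among [0, X), [X, Y), [Y, Z), [Z, n) containing [v];
   these four arcs are the branch sets of a K4 minor. *)
Definition arc_index (v : 'I_n) : nat := (X <= v) + (Y <= v) + (Z <= v).
Definition arc (v : 'I_n) : 'I_4 := inord (arc_index v).

Lemma arcE v (k : 'I_4) : arc_index v = k -> arc v = k.
Proof. by move=> vk; apply: val_inj; rewrite /= inordK // vk. Qed.

Lemma arc_connected u v : arc u = arc v ->
  connect [rel x y | [&& e x y, arc x == arc u & arc y == arc u]] u v.
Proof.
wlog uv : u v / (u <= v)%N.
  move=> wlog_uv; case: (leqP u v) => [uv | /ltnW vu] arcs; first exact: wlog_uv.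
  have rel_sym : symmetric [rel x y | [&& e x y, arc x == arc v & arc y == arc v]].
    by move=> x y; rewrite /= e_sym (andbC (arc x == _)).
  by rewrite arcs (sym_connect_sym rel_sym); apply: wlog_uv.
move=> /(congr1 val); rewrite /= !inordK /arc_index; try lia.
move=> idx; apply: interval_connected => // w /andP [uw wv].
by apply/eqP; apply: arcE; rewrite /= inordK /arc_index; lia.
Qed.

Lemma arcs_touch k l : exists u v, [/\ arc u = k, arc v = l & u = v \/ e u v].
Proof.
wlog kl : k l / (k <= l)%N.
  move=> wlog_kl; case: (leqP k l) => [| /ltnW lk]; first exact: wlog_kl.
  have [u [v [uk vl uv]]] := wlog_kl l k lk.
  by exists v, u; split => //; case: uv => [-> | ]; [left | right; rewrite e_sym].
suff : exists u v, [/\ arc_index u = k, arc_index v = l & u = v \/ e u v].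
  by move=> [u [v [/arcE uk /arcE vl uv]]]; exists u, v.
pose o : 'I_n := Ordinal (leq_ltn_trans (leq0n W) (ltn_ord W)).
have o_val : (o : nat) = 0 by [].
have o_last : (ord_pred o : nat) = n.-1 by rewrite /= modn_small; have := ltn_ord W; lia.
have eo : e o (ord_pred o) by rewrite e_sym e_ord_pred.
have eX := e_ord_pred X; have eY := e_ord_pred Y; have eZ := e_ord_pred Z.
have pX : (ord_pred X : nat) = X.-1 by apply: val_ord_pred; lia.
have pY : (ord_pred Y : nat) = Y.-1 by apply: val_ord_pred; lia.
have pZ : (ord_pred Z : nat) = Z.-1 by apply: val_ord_pred; lia.
have lt_Zn := ltn_ord Z.
rewrite /arc_index; case: k l kl => [[|[|[|[|k]]]] lt_k4] [[|[|[|[|l]]]] lt_l4] //= kl.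
- by exists W, W; split; [lia | lia | left].
- by exists (ord_pred X), X; split; [lia | lia | right].
- by exists W, Y; split; [lia | lia | right].
- by exists o, (ord_pred o); split; [lia | lia | right].
- by exists X, X; split; [lia | lia | left].
- by exists (ord_pred Y), Y; split; [lia | lia | right].
- by exists X, Z; split; [lia | lia | right].
- by exists Y, Y; split; [lia | lia | left].
- by exists (ord_pred Z), Z; split; [lia | lia | right].
- by exists Z, Z; split; [lia | lia | left].
Qed.

Lemma interleaved_chords_no_td2 : ~ has_tree_decomposition e 2.
Proof.
move/(tree_decomposition_clique_minor arc_connected arcs_touch).
by rewrite card_ord.
Qed.

End PolygonMinor.

Theorem lemma27 (n : nat) (e : rel 'I_n) (t : R) :
  (3 <= n)%N -> simple_graph e -> Rlt t 2 ->
  is_spanner e t -> treewidth_eq e 2 -> is_plane e.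
Proof.
move=> n3 [e_sym e_irr] t2 span [td2 _] a b c d eab ecd not_same z zab zcd.
have sides := spanner_sides e_irr n3 t2 span.
have ab : a != b by apply: contraTneq eab => ->; rewrite e_irr.
have cd : c != d by apply: contraTneq ecd => ->; rewrite e_irr.
have [// | ilv] := circ_chords_meet ab cd not_same zab zcd.
have [W [X [Y [Z [/andP [WX XY] YZ eWY eXZ]]]]] := interleaved_edges e_sym eab ecd ilv.
by case: (interleaved_chords_no_td2 e_sym sides WX XY YZ eWY eXZ).
Qed.
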